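(* There exists a locally finite group $K$ with a proper left invariant metric $d_K$ such that $\operatorname{asdim}_{AN}(K,d_K)=\infty$ and all asymptotic cones of $(K,d_K)$ are ultrametric.
   Context: A group is locally finite if each of its finitely generated subgroups is finite. A metric $d_G$ on a group $G$ is proper left invariant if $d_G(gh,gk)=d_G(h,k)$ for all $g,h,k\in G$ and for every $R>0$ only finitely many $g$ satisfy $d_G(1,g)\le R$. $\operatorname{asdim}_{AN}(X)$ is the least $n$ such that for some constants $C>0,k$ and every $s>0$ there is a cover $\{\mathcal U_0,\dots,\mathcal U_n\}$ of $X$ whose members have $s$-scale connected components (classes of ''joined by a chain inside the set with consecutive distances $<s$'') of diameter $\le Cs+k$; $\infty$ if no such $n$. Asymptotic cone $\operatorname{Cone}_\omega(X,c,d)$: for a non-principal ultrafilter $\omega$, sequence $c$ in $X$, positive reals $d_n$ with $\lim_\omega d_n=\infty$, the sequences $(x_n)$ with $\lim_\omega \rho(x_n,c_n)/d_n<\infty$, pseudometric $\lim_\omega\rho(x_n,y_n)/d_n$, modulo distance zero. Ultrametric: $\rho(x,y)\le\max\{\rho(x,z),\rho(y,z)\}$. *)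

From Stdlib Require Import Reals List.
Open Scope R_scope.

Definition is_group {G : Type} (mul : G -> G -> G) (one : G) (inv : G -> G) : Prop :=
  (forall a b c, mul (mul a b) c = mul a (mul b c)) /\
  (forall a, mul one a = a) /\ (forall a, mul a one = a) /\
  (forall a, mul (inv a) a = one) /\ (forall a, mul a (inv a) = one).

Inductive gen_subgroup {G : Type} (mul : G -> G -> G) (one : G) (inv : G -> G)
    (S : list G) : G -> Prop :=
  | gen_base : forall x, In x S -> gen_subgroup mul one inv S x
  | gen_one : gen_subgroup mul one inv S one
  | gen_inv : forall x, gen_subgroup mul one inv S x -> gen_subgroup mul one inv S (inv x)
  | gen_mul : forall x y, gen_subgroup mul one inv S x -> gen_subgroup mul one inv S y ->
              gen_subgroup mul one inv S (mul x y).

Definition finite_set {X : Type} (A : X -> Prop) : Prop :=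
  exists l : list X, forall x, A x -> In x l.

Definition locally_finite {G : Type} (mul : G -> G -> G) (one : G) (inv : G -> G) : Prop :=
  forall S : list G, finite_set (gen_subgroup mul one inv S).

Definition is_metric {X : Type} (d : X -> X -> R) : Prop :=
  (forall x y, 0 <= d x y) /\
  (forall x y, d x y = 0 <-> x = y) /\
  (forall x y, d x y = d y x) /\
  (forall x y z, d x z <= d x y + d y z).

Definition proper_left_invariant_metric {G : Type} (mul : G -> G -> G) (one : G)
    (d : G -> G -> R) : Prop :=
  is_metric d /\
  (forall g h k, d (mul g h) (mul g k) = d h k) /\
  (forall r : R, r > 0 -> finite_set (fun g => d one g <= r)).

Inductive s_chain {X : Type} (d : X -> X -> R) (s : R) (U : X -> Prop) : X -> X -> Prop :=
  | chain_refl : forall x, U x -> s_chain d s U x x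
  | chain_step : forall x y z, U x -> d x y < s -> s_chain d s U y z -> s_chain d s U x z.

Definition asdim_AN_le {X : Type} (d : X -> X -> R) (n : nat) : Prop :=
  exists C k : R, C > 0 /\
    forall s : R, s > 0 ->
      exists U : nat -> X -> Prop,
        (forall x, exists i, (i <= n)%nat /\ U i x) /\
        (forall i, (i <= n)%nat ->
           forall x y, s_chain d s (U i) x y -> d x y <= C * s + k).

Definition asdim_AN_infinite {X : Type} (d : X -> X -> R) : Prop :=
  forall n : nat, ~ asdim_AN_le d n.

Definition ultrafilter (w : (nat -> Prop) -> Prop) : Prop :=
  w (fun _ => True) /\
  ~ w (fun _ => False) /\
  (forall A B : nat -> Prop, w A -> (forall n, A n -> B n) -> w B) /\
  (forall A B : nat -> Prop, w A -> w B -> w (fun n => A n /\ B n)) /\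
  (forall A : nat -> Prop, w A \/ w (fun n => ~ A n)).

Definition non_principal (w : (nat -> Prop) -> Prop) : Prop :=
  forall m : nat, ~ w (fun n => n = m).

Definition ulim (w : (nat -> Prop) -> Prop) (a : nat -> R) (L : R) : Prop :=
  forall eps : R, eps > 0 -> w (fun n => Rabs (a n - L) < eps).

Definition ulim_infty (w : (nat -> Prop) -> Prop) (a : nat -> R) : Prop :=
  forall M : R, w (fun n => a n > M).

Definition ubounded (w : (nat -> Prop) -> Prop) (a : nat -> R) : Prop :=
  exists M : R, w (fun n => a n <= M).

Definition cone_point {X : Type} (d : X -> X -> R) (w : (nat -> Prop) -> Prop)
    (c : nat -> X) (dn : nat -> R) (x : nat -> X) : Prop :=
  ubounded w (fun n => d (x n) (c n) / dn n).

(* Passing to the quotient by distance zero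
   does not affect this inequality. *)
Definition cone_ultrametric {X : Type} (d : X -> X -> R) (w : (nat -> Prop) -> Prop)
    (c : nat -> X) (dn : nat -> R) : Prop :=
  forall x y z : nat -> X,
    cone_point d w c dn x -> cone_point d w c dn y -> cone_point d w c dn z ->
    forall Lxy Lxz Lyz : R,
      ulim w (fun n => d (x n) (y n) / dn n) Lxy ->
      ulim w (fun n => d (x n) (z n) / dn n) Lxz ->
      ulim w (fun n => d (y n) (z n) / dn n) Lyz ->
      Lxy <= Rmax Lxz Lyz.

Definition all_cones_ultrametric {X : Type} (d : X -> X -> R) : Prop :=
  forall w : (nat -> Prop) -> Prop, ultrafilter w -> non_principal w ->
  forall (c : nat -> X) (dn : nat -> R),
    (forall n, dn n > 0) -> ulim_infty w dn ->
    cone_ultrametric d w c dn.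

(* The group is [K = (nat, xor)], i.e. the direct sum of countably many
   copies of [Z/2], an element being the set of positions of its ones.  The
   positions are cut into consecutive blocks, block [b] having length [2 ^ b];
   if [a] has [w > 0] ones in block [b], that block contributes
   [log2 b + 1 + log2 w], and the norm of [a] is the largest contribution.
   Since [log2 (x + y) <= max (log2 x) (log2 y) + 1], the norm satisfies
   [|a xor b| <= max |a| |b| + 1]; after rescaling the additive constant
   disappears, so every asymptotic cone is ultrametric.  The offset
   [log2 b] makes balls finite.  For the dimension, the cube
   [[0, 2 ^ 2 ^ e]^(n+1)] embeds into [K] by unary codes in the blocks
   [2 ^ e, ..., 2 ^ e + n], adjacent points going to points at distance
   [<= e + 2] and opposite faces to sets at distance [> 2 ^ e]; the discrete
   Lebesgue covering lemma (derived from Sperner's lemma on Kuhn's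
   triangulation) then defeats every would-be cover by [n + 1] families. *)
From Stdlib Require Import Arith Lia List Bool.
Open Scope nat_scope.

Fixpoint count_below (f : nat -> bool) (T : nat) : nat :=
  match T with
  | 0 => 0
  | S T' => count_below f T' + (if f T' then 1 else 0)
  end.

Lemma count_below_ext f g T :
  (forall t, t < T -> f t = g t) -> count_below f T = count_below g T.
Proof.
  induction T as [|T IH]; simpl; intros H; auto.
  rewrite IH by (intros; apply H; lia). rewrite H by lia; auto.
Qed.

Lemma count_below_false f T : (forall t, t < T -> f t = false) -> count_below f T = 0.
Proof.
  induction T as [|T IH]; simpl; intros H; auto.
  rewrite IH by (intros; apply H; lia). rewrite H by lia; auto.
Qed.

Lemma count_below_pos f T t : t < T -> f t = true -> 0 < count_below f T.
Proof.
  induction T as [|T IH]; simpl; intros Ht Hf; [lia|].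
  destruct (Nat.eq_dec t T) as [->|Hne]; [rewrite Hf; lia|].
  specialize (IH ltac:(lia) Hf); lia.
Qed.

Lemma count_below_xorb f g T :
  count_below (fun t => xorb (f t) (g t)) T <= count_below f T + count_below g T.
Proof. induction T; simpl; auto. destruct (f T), (g T); simpl; lia. Qed.

Lemma count_below_xorb_ltb X Y T : X <= T -> Y <= T ->
  count_below (fun t => xorb (t <? X) (t <? Y)) T = Nat.max X Y - Nat.min X Y.
Proof.
  assert (Hgen : count_below (fun t => xorb (t <? X) (t <? Y)) T =
     Nat.max (Nat.min X T) (Nat.min Y T) - Nat.min (Nat.min X T) (Nat.min Y T)).
  { induction T as [|T IH]; simpl; [lia|]. rewrite IH.
    destruct (Nat.ltb_spec T X), (Nat.ltb_spec T Y); simpl; lia. }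
  intros HX HY; rewrite Hgen, (Nat.min_l X), (Nat.min_l Y); auto.
Qed.

Lemma lt_pow2_iff_bits a E : a < 2 ^ E <-> (forall p, E <= p -> Nat.testbit a p = false).
Proof.
  destruct (Nat.eq_dec a 0) as [->|Ha].
  { split; intros; [apply Nat.bits_0 | pose proof (Nat.pow_nonzero 2 E); lia]. }
  rewrite Nat.log2_lt_pow2 by lia. split.
  - intros H p Hp; apply Nat.bits_above_log2; lia.
  - intros H. destruct (Nat.lt_ge_cases (Nat.log2 a) E) as [|Hle]; auto.
    pose proof (Nat.bit_log2 a Ha) as Hbit; rewrite H in Hbit; auto; discriminate.
Qed.

Lemma testbit_above a p : a <= p -> Nat.testbit a p = false.
Proof.
  intros H. apply (lt_pow2_iff_bits a p); auto.
  pose proof (Nat.pow_gt_lin_r 2 p); lia.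
Qed.

(* The positions [2 ^ b - 1 + t], [t < 2 ^ b], form the [b]-th block; it is
   recovered from the position as [log2 (p + 1)]. *)
Lemma block_of_position b t : t < 2 ^ b -> Nat.log2 (2 ^ b - 1 + t + 1) = b.
Proof.
  intros H. apply Nat.log2_unique; [lia|].
  pose proof (Nat.pow_nonzero 2 b). rewrite Nat.pow_succ_r'. lia.
Qed.

Definition block_weight (b a : nat) : nat :=
  count_below (fun t => Nat.testbit a (2 ^ b - 1 + t)) (2 ^ b).

(* Block [b] starts beyond position [a] when [a < b]. *)
Lemma block_weight_high b a : a < b -> block_weight b a = 0.
Proof.
  intros H; apply count_below_false; intros t _; apply testbit_above.
  pose proof (Nat.pow_gt_lin_r 2 b); lia.
Qed.

Lemma block_weight_xor b x y :
  block_weight b (Nat.lxor x y) <= block_weight b x + block_weight b y.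
Proof.
  unfold block_weight; rewrite <- count_below_xorb.
  apply Nat.eq_le_incl, count_below_ext; intros; apply Nat.lxor_spec.
Qed.

(* The offset [log2 b] makes the far blocks heavy,
   which gives properness; the logarithm of the weight makes the norm
   quasi-ultrametric. *)
Definition block_scale (b : nat) : nat := Nat.log2 b + 1.

Definition block_norm (b x : nat) : nat :=
  if x =? 0 then 0 else block_scale b + Nat.log2 x.

Lemma block_norm_mono b x y : x <= y -> block_norm b x <= block_norm b y.
Proof.
  intros Hxy; unfold block_norm.
  destruct (Nat.eqb_spec x 0), (Nat.eqb_spec y 0); try lia.
  pose proof (Nat.log2_le_mono x y Hxy); lia.
Qed.

(* The key inequality: [log2 (x + y) <= max (log2 x) (log2 y) + 1]. *)
Lemma block_norm_quasi_ultrametric b x y z :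
  z <= x + y -> block_norm b z <= Nat.max (block_norm b x) (block_norm b y) + 1.
Proof.
  intros Hz.
  destruct (Nat.eqb_spec x 0) as [->|Hx].
  { pose proof (block_norm_mono b z y Hz); lia. }
  destruct (Nat.eqb_spec y 0) as [->|Hy].
  { pose proof (block_norm_mono b z x ltac:(lia)); lia. }
  (* [z <= 2 * max x y], hence [log2 z <= log2 (max x y) + 1]. *)
  assert (Hlog : Nat.log2 z <= S (Nat.log2 (Nat.max x y))).
  { rewrite <- Nat.log2_double by lia; apply Nat.log2_le_mono; lia. }
  assert (Hmax : Nat.log2 (Nat.max x y) <= Nat.max (Nat.log2 x) (Nat.log2 y)).
  { destruct (Nat.max_spec x y) as [[_ ->]|[_ ->]]; lia. }
  unfold block_norm; destruct (Nat.eqb_spec z 0); [lia|].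
  rewrite (proj2 (Nat.eqb_neq x 0) Hx), (proj2 (Nat.eqb_neq y 0) Hy); lia.
Qed.

Lemma block_norm_le_scale b x : x <= 1 -> block_norm b x <= block_scale b.
Proof.
  intros H; unfold block_norm; destruct (x =? 0); [lia|].
  pose proof (Nat.log2_le_mono x 1 H) as Hlog; rewrite Nat.log2_1 in Hlog; lia.
Qed.

Lemma block_scale_mono b c : b <= c -> block_scale b <= block_scale c.
Proof. intros H; unfold block_scale; pose proof (Nat.log2_le_mono b c H); lia. Qed.

Lemma block_scale_pow2_add e M : M <= 2 ^ e -> block_scale (2 ^ e + M) <= e + 2.
Proof.
  intros H; unfold block_scale.
  assert (Nat.log2 (2 ^ e + M) <= Nat.log2 (2 ^ S e)).
  { apply Nat.log2_le_mono; rewrite Nat.pow_succ_r'; lia. }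
  rewrite Nat.log2_pow2 in * by lia; lia.
Qed.

(* The norm of [a] is the largest block norm of its blocks; only the blocks
   [b <= a] can be nonzero. *)
Definition norm (a : nat) : nat :=
  list_max (map (fun b => block_norm b (block_weight b a)) (seq 0 (S a))).

Lemma norm_le_iff a n :
  norm a <= n <-> forall b, block_norm b (block_weight b a) <= n.
Proof.
  unfold norm; rewrite list_max_le, Forall_forall; split.
  - intros H b. destruct (Nat.le_gt_cases b a).
    + apply H, in_map_iff; exists b; split; auto; apply in_seq; lia.
    + rewrite block_weight_high by lia; unfold block_norm; simpl; lia.
  - intros H x Hx; apply in_map_iff in Hx; destruct Hx as [b [<- _]]; apply H.
Qed.

Lemma block_norm_le_norm b a : block_norm b (block_weight b a) <= norm a.
Proof. exact (proj1 (norm_le_iff a (norm a)) (le_n _) b). Qed.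

Lemma norm_xor_quasi_ultrametric a b :
  norm (Nat.lxor a b) <= Nat.max (norm a) (norm b) + 1.
Proof.
  apply norm_le_iff; intros c.
  eapply Nat.le_trans; [apply block_norm_quasi_ultrametric, block_weight_xor|].
  pose proof (block_norm_le_norm c a); pose proof (block_norm_le_norm c b); lia.
Qed.

Lemma norm_ge_bit a p :
  Nat.testbit a p = true -> block_scale (Nat.log2 (p + 1)) <= norm a.
Proof.
  intros H; set (b := Nat.log2 (p + 1)).
  destruct (Nat.log2_spec (p + 1) ltac:(lia)) as [Hlo Hhi]; fold b in Hlo, Hhi.
  rewrite Nat.pow_succ_r' in Hhi.
  assert (Hw : 0 < block_weight b a).
  { apply (count_below_pos _ _ (p + 1 - 2 ^ b)); [lia|].
    replace (2 ^ b - 1 + (p + 1 - 2 ^ b)) with p by lia; auto. }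
  pose proof (block_norm_le_norm b a); unfold block_norm in *.
  destruct (Nat.eqb_spec (block_weight b a) 0); lia.
Qed.

Lemma norm_eq_0 a : norm a = 0 <-> a = 0.
Proof.
  split; [|intros ->; reflexivity].
  intros H; apply Nat.bits_inj_0; intros p.
  destruct (Nat.testbit a p) eqn:E; auto.
  pose proof (norm_ge_bit a p E); unfold block_scale in *; lia.
Qed.

(* The triangle inequality: as nonzero norms are [>= 1], the additive
   constant of the quasi-ultrametric inequality is absorbed. *)
Lemma norm_xor_subadditive a b : norm (Nat.lxor a b) <= norm a + norm b.
Proof.
  destruct (Nat.eq_dec a 0) as [->|Ha]; [rewrite Nat.lxor_0_l; lia|].
  destruct (Nat.eq_dec b 0) as [->|Hb]; [rewrite Nat.lxor_0_r; lia|].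
  pose proof (norm_xor_quasi_ultrametric a b).
  pose proof (proj1 (Nat.neq_0_lt_0 _) (fun H => Ha (proj1 (norm_eq_0 a) H))).
  pose proof (proj1 (Nat.neq_0_lt_0 _) (fun H => Hb (proj1 (norm_eq_0 b) H))).
  lia.
Qed.

(* Balls of the norm are finite: a number of norm [<= R] has no one in the
   blocks [b >= 2 ^ R]. *)
Lemma norm_le_bounded a R : norm a <= R -> a < 2 ^ (2 ^ (2 ^ R)).
Proof.
  intros H; apply lt_pow2_iff_bits; intros p Hp.
  destruct (Nat.testbit a p) eqn:E; auto; exfalso.
  pose proof (norm_ge_bit a p E) as Hb; unfold block_scale in Hb.
  assert (Hlog : Nat.log2 (p + 1) < 2 ^ R).
  { destruct (Nat.eq_dec (Nat.log2 (p + 1)) 0) as [->|]; [apply Nat.neq_0_lt_0, Nat.pow_nonzero; lia|].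
    apply Nat.log2_lt_pow2; lia. }
  apply Nat.log2_lt_pow2 in Hlog; lia.
Qed.

Fixpoint of_bits (f : nat -> bool) (L : nat) : nat :=
  match L with
  | 0 => 0
  | S L' => if f L' then Nat.setbit (of_bits f L') L' else of_bits f L'
  end.

Lemma testbit_of_bits f L p : Nat.testbit (of_bits f L) p = (p <? L) && f p.
Proof.
  induction L as [|L IH]; simpl.
  - rewrite Nat.bits_0; destruct (Nat.ltb_spec p 0); auto; lia.
  - destruct (f L) eqn:EfL; rewrite ?Nat.setbit_eqb, IH;
      destruct (Nat.eqb_spec L p), (Nat.ltb_spec p L), (Nat.ltb_spec p (S L));
      subst; simpl; auto; try lia; rewrite ?EfL; auto.
Qed.

(* Unary encoding of a grid point [X : nat -> nat] with [M] coordinates: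
   block [base + i] starts with [X i] ones, and all other bits vanish. *)
Definition unary_code_bit (base M : nat) (X : nat -> nat) (p : nat) : bool :=
  let b := Nat.log2 (p + 1) in
  (base <=? b) && (b <? base + M) && (p + 1 - 2 ^ b <? X (b - base)).

Definition unary_code (base M : nat) (X : nat -> nat) : nat :=
  of_bits (unary_code_bit base M X) (2 ^ (base + M)).

Lemma testbit_unary_code base M X b t : t < 2 ^ b ->
  Nat.testbit (unary_code base M X) (2 ^ b - 1 + t) =
  (base <=? b) && (b <? base + M) && (t <? X (b - base)).
Proof.
  intros Ht. unfold unary_code, unary_code_bit.
  rewrite testbit_of_bits, block_of_position by auto.
  replace (2 ^ b - 1 + t + 1 - 2 ^ b) with t by (pose proof (Nat.pow_nonzero 2 b); lia).
  destruct (Nat.leb_spec base b), (Nat.ltb_spec b (base + M)); simpl; auto;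
    try (rewrite andb_false_r; auto).
  replace (2 ^ b - 1 + t <? 2 ^ (base + M)) with true; auto.
  symmetry; apply Nat.ltb_lt.
  assert (2 ^ S b <= 2 ^ (base + M)) by (apply Nat.pow_le_mono_r; lia).
  rewrite Nat.pow_succ_r' in *; lia.
Qed.

Lemma block_weight_code_diff base M X Y i : i < M -> X i <= 2 ^ base -> Y i <= 2 ^ base ->
  block_weight (base + i) (Nat.lxor (unary_code base M X) (unary_code base M Y)) =
  Nat.max (X i) (Y i) - Nat.min (X i) (Y i).
Proof.
  intros Hi HX HY.
  assert (2 ^ base <= 2 ^ (base + i)) by (apply Nat.pow_le_mono_r; lia).
  unfold block_weight; rewrite <- count_below_xorb_ltb with (T := 2 ^ (base + i)) by lia.
  apply count_below_ext; intros t Ht.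
  rewrite Nat.lxor_spec, !testbit_unary_code by auto.
  replace (base + i - base) with i by lia.
  replace (base <=? base + i) with true by (symmetry; apply Nat.leb_le; lia).
  replace (base + i <? base + M) with true by (symmetry; apply Nat.ltb_lt; lia).
  auto.
Qed.

Lemma block_weight_code_diff_out base M X Y b : b < base \/ base + M <= b ->
  block_weight b (Nat.lxor (unary_code base M X) (unary_code base M Y)) = 0.
Proof.
  intros Hb. apply count_below_false; intros t Ht.
  rewrite Nat.lxor_spec, !testbit_unary_code by auto.
  destruct Hb.
  - replace (base <=? b) with false by (symmetry; apply Nat.leb_gt; lia); auto.
  - replace (b <? base + M) with false by (symmetry; apply Nat.ltb_ge; lia).
    rewrite !andb_false_r; auto.
Qed.

Lemma norm_code_diff_adjacent base M X Y :
  (forall i, i < M -> X i <= 2 ^ base /\ Y i <= 2 ^ base /\ X i <= Y i + 1 /\ Y i <= X i + 1) ->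
  norm (Nat.lxor (unary_code base M X) (unary_code base M Y)) <= block_scale (base + M).
Proof.
  intros H; apply norm_le_iff; intros b.
  destruct (Nat.lt_ge_cases b base), (Nat.lt_ge_cases b (base + M));
    try (rewrite block_weight_code_diff_out by lia; unfold block_norm; simpl; lia).
  replace b with (base + (b - base)) by lia.
  destruct (H (b - base) ltac:(lia)) as [HX [HY [HXY HYX]]].
  rewrite block_weight_code_diff by lia.
  eapply Nat.le_trans; [apply block_norm_le_scale; lia|]; apply block_scale_mono; lia.
Qed.

Lemma norm_code_diff_far base M X Y i : i < M -> X i = 2 ^ base -> Y i = 0 ->
  base + 1 <= norm (Nat.lxor (unary_code base M X) (unary_code base M Y)).
Proof.
  intros Hi HX HY.
  pose proof (block_norm_le_norm (base + i) (Nat.lxor (unary_code base M X) (unary_code base M Y))) as H.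
  rewrite block_weight_code_diff, HX, HY in H by lia.
  replace (Nat.max (2 ^ base) 0 - Nat.min (2 ^ base) 0) with (2 ^ base) in H by lia.
  unfold block_norm, block_scale in H; rewrite Nat.log2_pow2 in H by lia.
  destruct (Nat.eqb_spec (2 ^ base) 0); [pose proof (Nat.pow_nonzero 2 base); lia | lia].
Qed.

From Stdlib Require Import Reals Lra Classical.

Lemma xor_group : is_group Nat.lxor 0 (fun x => x).
Proof.
  repeat split; intros.
  - apply Nat.lxor_assoc.
  - apply Nat.lxor_0_l.
  - apply Nat.lxor_0_r.
  - apply Nat.lxor_nilpotent.
  - apply Nat.lxor_nilpotent.
Qed.

(* The subgroup generated by [S] lies below [2 ^ (sum S)], since every
   generator does and [xor] never increases the bit length. *)
Lemma xor_locally_finite : locally_finite Nat.lxor 0 (fun x => x).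
Proof.
  intros S; set (B := fold_right Nat.add 0 S).
  exists (seq 0 (2 ^ B)); intros x Hx; apply in_seq.
  enough (x < 2 ^ B) by lia.
  induction Hx as [x Hx| |x _ IH|x y _ IHx _ IHy]; auto.
  - assert (x <= B).
    { unfold B; clear B; induction S as [|a S IHS]; simpl in *; [contradiction|].
      destruct Hx as [->|Hx]; [|specialize (IHS Hx)]; lia. }
    pose proof (Nat.pow_gt_lin_r 2 B); lia.
  - apply Nat.neq_0_lt_0, Nat.pow_nonzero; lia.
  - rewrite lt_pow2_iff_bits in *; intros p Hp.
    rewrite Nat.lxor_spec, IHx, IHy by auto; auto.
Qed.

Open Scope R_scope.

Definition dist (x y : nat) : R := INR (norm (Nat.lxor x y)).

Lemma lxor_cancel_middle x y z : Nat.lxor x z = Nat.lxor (Nat.lxor x y) (Nat.lxor y z).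
Proof.
  rewrite Nat.lxor_assoc, <- (Nat.lxor_assoc y y z), Nat.lxor_nilpotent, Nat.lxor_0_l.
  auto.
Qed.

Lemma dist_proper_left_invariant : proper_left_invariant_metric Nat.lxor 0%nat dist.
Proof.
  unfold dist; split; [|split].
  - repeat split.
    + intros; apply pos_INR.
    + intros H; apply Nat.lxor_eq_0_iff, norm_eq_0, INR_eq; rewrite H; auto.
    + intros ->; rewrite Nat.lxor_nilpotent; reflexivity.
    + intros; rewrite Nat.lxor_comm; auto.
    + intros x y z; rewrite (lxor_cancel_middle x y z), <- plus_INR.
      apply le_INR, norm_xor_subadditive.
  - intros g h k. do 2 f_equal.
    rewrite (Nat.lxor_comm g h), Nat.lxor_assoc, <- (Nat.lxor_assoc g g k).
    rewrite Nat.lxor_nilpotent, Nat.lxor_0_l; auto.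
  - intros r _. destruct (INR_archimed 1 r ltac:(lra)) as [R HR].
    exists (seq 0 (2 ^ (2 ^ (2 ^ R)))); intros g Hg; apply in_seq.
    enough (g < 2 ^ (2 ^ (2 ^ R)))%nat by lia.
    apply norm_le_bounded; rewrite Nat.lxor_0_l in Hg; apply INR_le; lra.
Qed.

Lemma dist_quasi_ultrametric x y z : dist x y <= Rmax (dist x z) (dist y z) + 1.
Proof.
  unfold dist; rewrite (lxor_cancel_middle x z y), (Nat.lxor_comm z y).
  pose proof (norm_xor_quasi_ultrametric (Nat.lxor x z) (Nat.lxor y z)) as H.
  apply le_INR in H; rewrite plus_INR in H; simpl in H.
  destruct (Nat.max_spec (norm (Nat.lxor x z)) (norm (Nat.lxor y z))) as [[Hlt ->]|[Hle ->]] in H.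
  - apply lt_INR in Hlt; rewrite Rmax_right by lra; lra.
  - apply le_INR in Hle; rewrite Rmax_left by lra; lra.
Qed.

Lemma ultrafilter_nonempty w (A : nat -> Prop) : ultrafilter w -> w A -> exists n, A n.
Proof.
  intros [_ [Hfalse [Hup _]]] HA; apply NNPP; intros Hno.
  apply Hfalse, (Hup A); auto; intros n Hn; apply Hno; eauto.
Qed.

(* An additive defect [c] in the ultrametric inequality disappears after
   rescaling by [dn n -> oo], so all asymptotic cones are ultrametric. *)
Lemma all_cones_ultrametric_of_quasi {X : Type} (d : X -> X -> R) (c : R) :
  (forall x y z, d x y <= Rmax (d x z) (d y z) + c) -> all_cones_ultrametric d.
Proof.
  intros Hquasi w Hw _ base dn Hdn Hinf x y z _ _ _ Lxy Lxz Lyz Hxy Hxz Hyz.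
  apply Rnot_lt_le; intros Hlt.
  set (m := Rmax Lxz Lyz) in *; set (eps := (Lxy - m) / 4).
  assert (Heps : eps > 0) by (unfold eps; lra).
  assert (Hgap : Lxy = m + 4 * eps) by (unfold eps; lra).
  destruct Hw as [HT [HF [Hup [Hcap Hult]]]].
  assert (Hnear : w (fun n => (Rabs (d (x n) (y n) / dn n - Lxy) < eps /\
                               Rabs (d (x n) (z n) / dn n - Lxz) < eps) /\
                              (Rabs (d (y n) (z n) / dn n - Lyz) < eps /\
                               dn n > Rabs c / eps))).
  { apply Hcap; apply Hcap; auto. }
  destruct (ultrafilter_nonempty w _ (conj HT (conj HF (conj Hup (conj Hcap Hult)))) Hnear)
    as [n [[H1 H2] [H3 H4]]].
  pose proof (Hdn n) as Hd.
  apply Rabs_def2 in H1; apply Rabs_def2 in H2; apply Rabs_def2 in H3.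
  assert (Hdefect : c / dn n < eps).
  { apply Rle_lt_trans with (Rabs c / dn n).
    - unfold Rdiv; apply Rmult_le_compat_r; [left; apply Rinv_0_lt_compat; lra | apply Rle_abs].
    - apply Rmult_lt_reg_r with (dn n); [lra|]; unfold Rdiv.
      rewrite Rmult_assoc, Rinv_l by lra.
      apply Rmult_lt_reg_r with (/ eps); [apply Rinv_0_lt_compat; lra|].
      replace (eps * dn n * / eps) with (dn n) by (field; lra). lra. }
  assert (Hscaled : d (x n) (y n) / dn n <= d (x n) (z n) / dn n + c / dn n \/
                    d (x n) (y n) / dn n <= d (y n) (z n) / dn n + c / dn n).
  { pose proof (Hquasi (x n) (y n) (z n)) as Hq.
    assert (Hinv : 0 < / dn n) by (apply Rinv_0_lt_compat; lra).
    unfold Rdiv; rewrite <- !Rmult_plus_distr_r.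
    destruct (Rle_dec (d (x n) (z n)) (d (y n) (z n))); [right|left];
      apply Rmult_le_compat_r; try lra;
      [rewrite Rmax_right in Hq | rewrite Rmax_left in Hq]; lra. }
  assert (Lxz <= m) by apply Rmax_l; assert (Lyz <= m) by apply Rmax_r.
  destruct Hscaled; lra.
Qed.

Lemma linear_lt_pow2 K : (K * (4 * K + 3) < 2 ^ (4 * K))%nat.
Proof.
  pose proof (Nat.pow_gt_lin_r 2 (2 * K) ltac:(lia)) as H.
  replace (4 * K)%nat with (2 * K + 2 * K)%nat by lia.
  rewrite Nat.pow_add_r; nia.
Qed.

(* Given the constants [C], [k] of a putative Assouad-Nagata cover with
   [n + 1] colours, a block index [e] for which the cube of side [2 ^ e] in
   dimension [n + 1] beats the bound [C s + k] at scale [s = e + 3]. *)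
Lemma choose_block_index (C k : R) (n : nat) : C > 0 ->
  exists e : nat, (S n <= 2 ^ e)%nat /\ C * INR (e + 3) + k < INR (2 ^ e + 1).
Proof.
  intros HC. destruct (INR_archimed 1 (C + Rabs k + INR n + 1) ltac:(lra)) as [K HK].
  pose proof (Rle_abs k); pose proof (pos_INR n); pose proof (Rabs_pos k).
  exists (4 * K)%nat; split.
  - assert (INR n < INR K) as HnK by lra; apply INR_lt in HnK.
    pose proof (Nat.pow_gt_lin_r 2 (4 * K) ltac:(lia)); lia.
  - pose proof (lt_INR _ _ (linear_lt_pow2 K)) as HE.
    rewrite mult_INR, !plus_INR, mult_INR in HE; rewrite !plus_INR, mult_INR.
    replace (INR 4) with 4 in * by (simpl; lra); replace (INR 3) with 3 in * by (simpl; lra).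
    replace (INR 1) with 1 by (simpl; lra).
    assert (C * (4 * INR K + 3) <= (INR K - Rabs k - 1) * (4 * INR K + 3)).
    { apply Rmult_le_compat_r; lra. }
    nra.
Qed.
From mathcomp Require Import all_boot all_fingroup zify.
From Stdlib Require Import FunctionalExtensionality ClassicalEpsilon.
Set Implicit Arguments. Unset Strict Implicit. Unset Printing Implicit Defensive.
Open Scope nat_scope.

Lemma odd_sum (I : finType) (P : pred I) (F : I -> nat) :
  odd (\sum_(i | P i) F i) = \big[addb/false]_(i | P i) odd (F i).
Proof. exact: (big_morph odd oddD). Qed.

Lemma sum_even_of_involution (T : finType) (P : pred T) (g : T -> T) (F : T -> nat) :
  (forall x, P x -> P (g x)) -> (forall x, P x -> g (g x) = x) ->
  (forall x, P x -> g x != x) -> (forall x, P x -> F (g x) = F x) ->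
  ~~ odd (\sum_(x | P x) F x).
Proof.
move=> Pg gK g_neq Fg; pose Q x := enum_rank x < enum_rank (g x).
rewrite (bigID Q) /=.
suff -> : \sum_(i | P i && ~~ Q i) F i = \sum_(i | P i && Q i) F i
  by rewrite addnn odd_double.
rewrite (reindex_onto g g) => [|i /andP [Pi _]]; last exact: gK.
apply: eq_big => [y|y]; last first.
  by move=> /andP [/andP [Pgy _] /eqP gK_y]; symmetry; rewrite -{1}gK_y; exact: Fg.
case Py: (P y) => /=; last first.
  by apply/negP => /andP [/andP [Pgy _] /eqP E]; move: (Pg _ Pgy); rewrite E Py.
rewrite Pg // gK // eqxx andbT /Q gK //= -leqNgt leq_eqVlt.
case: eqP => [/val_inj/enum_rank_inj E|//].
by move: (g_neq y Py); rewrite -E eqxx.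
Qed.

Lemma sum_reindex_bijection (T : finType) (A B : pred T) (f g : T -> T) (F : T -> nat) :
  (forall x, A x -> B (f x)) -> (forall y, B y -> A (g y)) ->
  (forall x, A x -> g (f x) = x) -> (forall y, B y -> f (g y) = y) ->
  \sum_(x | A x) F (f x) = \sum_(y | B y) F y.
Proof.
move=> fAB gBA fK gK; rewrite [RHS](reindex_onto f g) //; symmetry.
apply: eq_bigl => x; apply/idP/idP => [/andP [Bfx /eqP E]|Ax].
  by rewrite -E gBA.
by rewrite fAB // fK // eqxx.
Qed.

Lemma sum_nat_of_bool_card n (P : pred 'I_n) : \sum_(k < n) (P k : nat) = #|P|.
Proof.
rewrite -sum1_card [RHS]big_mkcond /=; apply: eq_bigr => k _.
by rewrite unfold_in; case: (P k).
Qed.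

Lemma surjective_injective (T : finType) (f : T -> T) :
  (forall y, exists x, f x = y) -> injective f.
Proof.
move=> f_onto; have f_im : f @: setT = setT.
  apply/setP => y; rewrite !inE; case: (f_onto y) => x <-.
  by apply: imset_f; rewrite inE.
have : #|f @: setT| == #|[set: T]| by rewrite f_im.
by move/imset_injP => f_inj x y fxy; apply: f_inj; rewrite ?inE.
Qed.

Section Doors.
Variables (d : nat) (l : nat -> nat).
Hypothesis l_le : forall j, j <= d -> l j <= d.

Definition door (k : nat) : bool :=
  [forall a : 'I_d, [exists j : 'I_d.+1, (j != k :> nat) && (l j == a)]].

Definition fully_labelled : bool :=
  [forall a : 'I_d.+1, [exists j : 'I_d.+1, l j == a]].

Definition vertex_label (j : 'I_d.+1) : 'I_d.+1 := inord (l j).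

Lemma vertex_labelE j : (vertex_label j : nat) = l j.
Proof. by rewrite /vertex_label inordK // ltnS l_le // -ltnS. Qed.

(* A fully labelled simplex has a single door, opposite to the vertex
   labelled [d]. *)
Lemma doors_fully_labelled : fully_labelled -> #|[pred k : 'I_d.+1 | door k]| = 1.
Proof.
move=> full; have lab_onto : forall y, exists x, vertex_label x = y.
  move=> y; move/forallP: full => /(_ y) /existsP [x /eqP lx]; exists x.
  by apply: ord_inj; rewrite vertex_labelE.
have lab_inj := surjective_injective lab_onto.
case: (lab_onto ord_max) => k0 lab_k0.
rewrite (@eq_card _ _ (pred1 k0)) ?card1 // => k; rewrite !inE; apply/idP/idP.
- move/forallP => door_k; apply/negPn/negP => k_neq.
  have lk_lt : l k < d.
    rewrite -vertex_labelE ltn_neqAle -ltnS ltn_ord andbT.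
    apply/negP => /eqP lk; move/negP: k_neq; apply; apply/eqP/lab_inj.
    by apply: ord_inj; rewrite lk lab_k0.
  move: (door_k (Ordinal lk_lt)) => /existsP [j /andP [j_neq /eqP lj]].
  by move/negP: j_neq; apply; apply/eqP; congr val; apply/lab_inj/ord_inj; rewrite !vertex_labelE.
- move/eqP => ->; apply/forallP => a.
  have a_lt : a < d.+1 by apply: ltn_trans (ltn_ord a) _.
  case: (lab_onto (Ordinal a_lt)) => j lj; apply/existsP; exists j; apply/andP; split.
    apply/negP => /eqP /val_inj E; move: lj; rewrite E lab_k0 => /(congr1 val) /= ad.
    by move: (ltn_ord a); rewrite -ad ltnn.
  by rewrite -vertex_labelE lj.
Qed.

(* A simplex that is not fully labelled but has a door [k0] never uses the
   label [d], so exactly one label is repeated, at [k0] and some [j0]; its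
   doors are the facets opposite to [k0] and to [j0]. *)
Lemma doors_not_fully_labelled :
  ~~ fully_labelled -> ~~ odd #|[pred k : 'I_d.+1 | door k]|.
Proof.
move=> /forallPn [missing /negP missing_not_hit].
case: (boolP [exists k : 'I_d.+1, door k]) => [/existsP [k0 door_k0]|no_door]; last first.
  rewrite (@eq_card _ _ pred0) ?card0 // => k; rewrite !inE.
  by apply/negP => door_k; move/negP: no_door; apply; apply/existsP; exists k.
have l_lt : forall j : 'I_d.+1, l j < d.
  move=> j; have := ltn_ord (vertex_label j); rewrite vertex_labelE ltnS leq_eqVlt.
  case/orP => [/eqP lj|//]; exfalso; apply: missing_not_hit; apply/existsP.
  case: (ltngtP missing d) => [m_lt|m_gt|m_eq].
  - by move/forallP: door_k0 => /(_ (Ordinal m_lt)) /existsP [j' /andP [_ lj']]; exists j'.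
  - by move: (ltn_ord missing); rewrite ltnS leqNgt m_gt.
  - by exists j; rewrite lj m_eq.
move/forallP: (door_k0) => /(_ (Ordinal (l_lt k0))) /existsP [j0 /andP [j0_neq /eqP lj0]].
(* [vertex_label] maps the [d] vertices other than [k0] onto [0..d-1]. *)
have lab_inj : {in [set~ k0] &, injective vertex_label}.
  apply/imset_injP; rewrite eqn_leq leq_imset_card /= cardsC1 card_ord /=.
  have cover : [set~ (@ord_max d)] \subset vertex_label @: [set~ k0].
    apply/subsetP => y; rewrite !inE => y_neq.
    have y_lt : y < d.
      have := ltn_ord y; rewrite ltnS leq_eqVlt => /orP [/eqP E|//].
      by exfalso; move/negP: y_neq; apply; apply/eqP/ord_inj.
    move/forallP: door_k0 => /(_ (Ordinal y_lt)) /existsP [j /andP [j_neq /eqP lj]].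
    apply/imsetP; exists j; first by rewrite !inE.
    by apply: ord_inj; rewrite vertex_labelE lj.
  by move: (subset_leq_card cover); rewrite cardsC1 card_ord.
have k0_neq : k0 != j0 by rewrite eq_sym; apply/negP => /eqP E; rewrite E eqxx in j0_neq.
rewrite (@eq_card _ _ [set k0; j0]); first by rewrite cards2 k0_neq.
move=> k; rewrite !inE; apply/idP/idP.
- move/forallP => door_k; apply/negPn/negP; rewrite negb_or => /andP [k_k0 k_j0].
  move: (door_k (Ordinal (l_lt k))) => /existsP [j /andP [j_k /eqP lj]].
  case: (eqVneq j k0) => [j_eq|j_k0].
  + subst j.
    have : vertex_label k = vertex_label j0.
      by apply: ord_inj; rewrite !vertex_labelE; rewrite /= in lj lj0; rewrite lj0 -lj.
    move/lab_inj; rewrite !inE k_k0 eq_sym k0_neq => /(_ isT isT) E.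
    by rewrite E eqxx in k_j0.
  + have : vertex_label j = vertex_label k by apply: ord_inj; rewrite !vertex_labelE lj.
    move/lab_inj; rewrite !inE j_k0 k_k0 => /(_ isT isT) E.
    by rewrite E eqxx in j_k.
- case/orP => /eqP -> //; apply/forallP => a.
  move/forallP: door_k0 => /(_ a) /existsP [j /andP [j_k0 /eqP lj]].
  apply/existsP; case: (eqVneq j j0) => [j_eq|j_j0].
  + by exists k0; apply/andP; split; rewrite // -lj j_eq lj0 /=.
  + by exists j; rewrite lj eqxx andbT.
Qed.

Lemma door_parity : odd (\sum_(k < d.+1) door k) = fully_labelled.
Proof.
rewrite (sum_nat_of_bool_card (fun k : 'I_d.+1 => door k)).
case: (boolP fully_labelled) => full.
- by rewrite (doors_fully_labelled full).
- exact/negbTE/doors_not_fully_labelled.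
Qed.
End Doors.

Lemma door_eq_on d l l' (k : nat) :
  (forall j, j <= d -> j != k -> l j = l' j) -> door d l k = door d l' k.
Proof.
move=> ll'; apply: eq_forallb => a; apply: eq_existsb => j.
by case: (eqVneq (j : nat) k) => //= j_k; rewrite ll' // -ltnS ltn_ord.
Qed.

(* Sperner's lemma for Kuhn's triangulation of the cube [[0, N]^M].
   A simplex is given by a base corner [b] in [{0..N-1}^M] and a permutation
   [q] of the coordinates; its vertex [k] (for [k <= M]) is [b + e_q(k)],
   where [e_q(k)] is the indicator of the coordinates [i] with [q i < k].  The proof is the classical door-counting induction on the
   faces [{x | x_i = 0 for all i >= d}]. *)
Section Sperner.
Variables (m0 n0 : nat) (lam : ('I_m0.+1 -> nat) -> nat).
Local Notation M := m0.+1.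
Local Notation N := n0.+1.

Definition in_cube (x : 'I_M -> nat) : Prop := forall i, x i <= N.

Hypothesis label_le : forall x, lam x <= M.
Hypothesis label_face0 : forall x (i : 'I_M), x i = 0 -> lam x <> i.+1.
Hypothesis label_faceN : forall x (i : 'I_M), in_cube x -> x i = N -> lam x <> 0.

Definition simplex := ({ffun 'I_M -> 'I_N} * {perm 'I_M})%type.

Definition vertex (p : simplex) (k : nat) : 'I_M -> nat := fun i => p.1 i + (p.2 i < k).

Definition label (p : simplex) (j : nat) : nat := lam (vertex p j).

(* [p] lies in the [d]-dimensional face: the coordinates [i >= d] are never
   raised, so that vertices [0..d] of [p] form a simplex of that face. *)
Definition in_face d (p : simplex) : bool :=
  [forall i : 'I_M, (d <= i) ==> ((p.1 i == 0 :> nat) && (p.2 i == i :> nat))].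

Definition full_count d : nat := \sum_(p | in_face d p) fully_labelled d (label p).

Lemma in_faceP d (p : simplex) :
  reflect (forall x : 'I_M, d <= x -> (p.1 x : nat) = 0 /\ (p.2 x : nat) = x) (in_face d p).
Proof.
apply: (iffP forallP) => H x.
- by move=> dx; move: (H x); rewrite dx /= => /andP [/eqP -> /eqP ->].
- by apply/implyP => dx; case: (H x dx) => -> ->; rewrite !eqxx.
Qed.

Lemma vertex_in_cube p k : in_cube (vertex p k).
Proof. by move=> i; rewrite /vertex; have := ltn_ord (p.1 i); case: (_ < k); lia. Qed.

Lemma label_in_face d p j : in_face d p -> j <= d -> label p j <= d.
Proof.
move=> /in_faceP p_face jd; rewrite /label leqNgt; apply/negP => d_lt.
have i_lt : (lam (vertex p j)).-1 < M by have := label_le (vertex p j); lia.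
have vanish : vertex p j (Ordinal i_lt) = 0.
  have [|b0 q0] := p_face (Ordinal i_lt); first by rewrite /=; lia.
  by rewrite /vertex b0 q0 /=; apply/eqP; rewrite eqb0 -leqNgt; lia.
by apply: (label_face0 vanish); rewrite /= prednK //; lia.
Qed.

(* The [0]-dimensional face is the corner [0], a single fully labelled
   simplex. *)
Lemma full_count0_odd : odd (full_count 0).
Proof.
pose p0 : simplex := ([ffun => ord0], 1%g).
have p0_face : in_face 0 p0 by apply/forallP => i; rewrite /= ffunE perm1 !eqxx.
rewrite /full_count (big_pred1 p0); last first.
  move=> p; apply/idP/idP => [/in_faceP p_face|/eqP -> //]; apply/eqP.
  case: p p_face => b q /= p_face; congr pair.
  - by apply/ffunP => i; rewrite ffunE; apply: ord_inj; case: (p_face i).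
  - by apply/permP => i; rewrite perm1; apply: ord_inj; case: (p_face i).
suff -> : fully_labelled 0 (label p0) by [].
apply/forallP => a; apply/existsP; exists ord0.
have := label_in_face p0_face (leqnn 0); rewrite leqn0 => /eqP ->.
by case: a => [[]].
Qed.

Section Step.
Variable d : nat.
Hypothesis d_lt_m : d < M.
Local Notation D := d.+1.

Definition rotate_fun (v : 'I_M) : 'I_M :=
  if v == 0 :> nat then inord d else if v <= d then inord v.-1 else v.

Lemma rotate_funE v :
  (rotate_fun v : nat) = if v == 0 :> nat then d else if v <= d then v.-1 else v.
Proof.
rewrite /rotate_fun; case: eqP => _; first by rewrite inordK.
by case: ifP => // vd; rewrite inordK //; lia.
Qed.

Lemma rotate_fun_inj : injective rotate_fun.
Proof.
move=> u v /(congr1 val); rewrite /= !rotate_funE => E; apply: ord_inj; move: E.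
by case: eqP => ?; case: eqP => ?; try case: ifP => ?; try case: ifP => ?; lia.
Qed.

Definition rotate : {perm 'I_M} := perm rotate_fun_inj.

Lemma rotateE v :
  (rotate v : nat) = if v == 0 :> nat then d else if v <= d then v.-1 else v.
Proof. by rewrite /rotate permE rotate_funE. Qed.

Lemma rotate_fix (v : 'I_M) : d < v -> rotate v = v.
Proof. by move=> dv; apply: ord_inj; rewrite rotateE; case: eqP => ?; try case: ifP => ?; lia. Qed.

Lemma rotate_eq_d (v : 'I_M) : (rotate v == d :> nat) = (v == 0 :> nat).
Proof.
rewrite rotateE; case: (eqP (x := v : nat)) => v0; first by rewrite eqxx.
by case: ifP => vd; apply/eqP; lia.
Qed.

Lemma rotateV_fix (v : 'I_M) : d < v -> (rotate^-1)%g v = v.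
Proof. by move=> dv; apply: (perm_inj (s := rotate)); rewrite permKV rotate_fix. Qed.

Lemma rotateV_eq0 (w : 'I_M) : ((rotate^-1)%g w == 0 :> nat) = (w == d :> nat).
Proof. by rewrite -{2}(permKV rotate w) rotate_eq_d. Qed.

(* The coordinates raised first and last along the simplex [p]. *)
Definition first_coord (p : simplex) : 'I_M := (p.2^-1)%g (inord 0).
Definition last_coord (p : simplex) : 'I_M := (p.2^-1)%g (inord d).

Lemma perm_first_coord (p : simplex) : (p.2 (first_coord p) : nat) = 0.
Proof. by rewrite /first_coord permKV inordK. Qed.

Lemma perm_last_coord (p : simplex) : (p.2 (last_coord p) : nat) = d.
Proof. by rewrite /last_coord permKV inordK. Qed.

Lemma perm_eq0 (p : simplex) (x : 'I_M) : (p.2 x == 0 :> nat) = (x == first_coord p).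
Proof.
apply/eqP/eqP => [px|->]; last exact: perm_first_coord.
by apply: (perm_inj (s := p.2)); apply: ord_inj; rewrite px perm_first_coord.
Qed.

Lemma perm_eqd (p : simplex) (x : 'I_M) : (p.2 x == d :> nat) = (x == last_coord p).
Proof.
apply/eqP/eqP => [px|->]; last exact: perm_last_coord.
by apply: (perm_inj (s := p.2)); apply: ord_inj; rewrite px perm_last_coord.
Qed.

(* Pivoting [p] across its facet opposite to vertex [0] yields the simplex
   [pivot p] with vertices [1..D] of [p] followed by a new vertex; it stays
   in the cube unless the first coordinate of [p] is already at the top.
   [unpivot] is the inverse move across the facet opposite to vertex [D]. *)
Definition top_first (p : simplex) : bool := p.1 (first_coord p) == n0 :> nat.
Definition bottom_last (p : simplex) : bool := p.1 (last_coord p) == 0 :> nat.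

Definition pivot (p : simplex) : simplex :=
  ([ffun x => inord (p.1 x + (p.2 x == 0 :> nat))], (p.2 * rotate)%g).
Definition unpivot (p : simplex) : simplex :=
  ([ffun x => inord (p.1 x - (p.2 x == d :> nat))], (p.2 * rotate^-1)%g).

Definition pivotable (p : simplex) : bool := in_face D p && ~~ top_first p.
Definition unpivotable (p : simplex) : bool := in_face D p && ~~ bottom_last p.

Lemma pivot_base (p : simplex) (x : 'I_M) :
  pivotable p -> ((pivot p).1 x : nat) = p.1 x + (p.2 x == 0 :> nat).
Proof.
move=> /andP [_ not_top]; rewrite ffunE inordK //.
case: eqP => px; last by rewrite addn0.
have -> : x = first_coord p by apply/eqP; rewrite -perm_eq0 px.
by move: not_top (ltn_ord (p.1 (first_coord p))); rewrite /top_first; lia.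
Qed.

Lemma unpivot_base (p : simplex) (x : 'I_M) :
  ((unpivot p).1 x : nat) = p.1 x - (p.2 x == d :> nat).
Proof. by rewrite ffunE inordK //; apply: leq_ltn_trans (leq_subr _ _) (ltn_ord _). Qed.

Lemma pivot_last_coord (p : simplex) : last_coord (pivot p) = first_coord p.
Proof.
rewrite /last_coord; apply: (perm_inj (s := (pivot p).2)); rewrite permKV /= permM.
by apply: ord_inj; rewrite rotateE perm_first_coord /= inordK.
Qed.

Lemma unpivot_first_coord (p : simplex) : first_coord (unpivot p) = last_coord p.
Proof.
rewrite /first_coord; apply: (perm_inj (s := (unpivot p).2)); rewrite permKV /= permM.
by apply: ord_inj; rewrite inordK //; apply/eqP; rewrite eq_sym rotateV_eq0 perm_last_coord.
Qed.

Lemma pivot_unpivotable (p : simplex) : pivotable p -> unpivotable (pivot p).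
Proof.
move=> p_piv; have /andP [/in_faceP p_face _] := p_piv; apply/andP; split.
- apply/in_faceP => x Dx; rewrite pivot_base //; case: (p_face x Dx) => -> px /=.
  split; first by rewrite px; case: (x : nat) Dx.
  by rewrite permM (_ : p.2 x = x) ?rotate_fix //; apply: ord_inj.
- by rewrite /bottom_last pivot_last_coord pivot_base // perm_first_coord eqxx addn1.
Qed.

Lemma unpivot_pivotable (p : simplex) : unpivotable p -> pivotable (unpivot p).
Proof.
move=> /andP [/in_faceP p_face not_bottom]; apply/andP; split.
- apply/in_faceP => x Dx; rewrite unpivot_base; case: (p_face x Dx) => -> px /=.
  by split => //; rewrite permM (_ : p.2 x = x) ?rotateV_fix //; apply: ord_inj.
- rewrite /top_first unpivot_first_coord unpivot_base perm_last_coord eqxx subn1.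
  by move: not_bottom (ltn_ord (p.1 (last_coord p))); rewrite /bottom_last; lia.
Qed.

Lemma pivotK (p : simplex) : pivotable p -> unpivot (pivot p) = p.
Proof.
case: p => b q p_piv; congr pair; last by rewrite /= mulgK.
by apply/ffunP => x; apply: ord_inj; rewrite unpivot_base pivot_base //= permM rotate_eq_d addnK.
Qed.

Lemma unpivotK (p : simplex) : unpivotable p -> pivot (unpivot p) = p.
Proof.
move=> p_unpiv; have := unpivot_pivotable p_unpiv.
case: p p_unpiv => b q p_unpiv up_piv; congr pair; last by rewrite /= mulgKV.
apply/ffunP => x; apply: ord_inj; rewrite pivot_base // unpivot_base /= permM rotateV_eq0.
case: eqP => [qx|_]; last by rewrite subn0 addn0.
have -> : x = last_coord (b, q) by apply/eqP; rewrite -perm_eqd qx.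
by move: p_unpiv => /andP [_]; rewrite /bottom_last /=; lia.
Qed.

Lemma vertex_pivot (p : simplex) j :
  pivotable p -> j <= d -> vertex (pivot p) j = vertex p j.+1.
Proof.
move=> p_piv jd; apply: functional_extensionality => x.
rewrite /vertex pivot_base //= permM rotateE -addnA; congr addn.
by case: eqP => [->|px] /=; [rewrite ltnNge jd | case: ifP => /=; lia].
Qed.

Lemma door_pivot (p : simplex) :
  pivotable p -> door D (label (pivot p)) D = door D (label p) 0.
Proof.
move=> p_piv; apply: eq_forallb => a; apply/existsP/existsP => [[j]|[j]] /andP [j_neq /eqP lj].
- have jd : j <= d by move: (ltn_ord j) j_neq; lia.
  have j1_lt : j.+1 < D.+1 by rewrite ltnS.
  by exists (Ordinal j1_lt); rewrite /= -lj /label vertex_pivot.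
- have j1_lt : j.-1 < D.+1 by apply: leq_ltn_trans (leq_pred _) (ltn_ord _).
  exists (Ordinal j1_lt) => /=; apply/andP; split; first by move: (ltn_ord j); lia.
  rewrite -lj /label vertex_pivot ?prednK ?lt0n //.
  by move: (ltn_ord j) j_neq; lia.
Qed.

(* At the top, all vertices [1..D] have the first coordinate equal to [N],
   so label [0] is missing from the facet opposite to vertex [0]. *)
Lemma door0_top_first (p : simplex) : in_face D p -> top_first p -> door D (label p) 0 = false.
Proof.
move=> _ top; apply/negP => /forallP /(_ ord0) /existsP [j /andP [j_neq /eqP lj]].
apply: (label_faceN (i := first_coord p) (vertex_in_cube p j)) lj.
by rewrite /vertex perm_first_coord (eqP top) lt0n j_neq addn1.
Qed.

Lemma last_coord_lt (p : simplex) : in_face D p -> last_coord p < D.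
Proof.
move/in_faceP => p_face; rewrite ltnNge; apply/negP => Dx.
by case: (p_face _ Dx) => _; rewrite perm_last_coord => E; move: Dx; rewrite -E ltnn.
Qed.

(* At the bottom, vertices [0..d] have the last coordinate [0], so the
   label [last_coord p + 1] is missing from the facet opposite to [D]
   unless that label is [D] itself. *)
Lemma doorD_bottom_last (p : simplex) :
  in_face D p -> bottom_last p -> (last_coord p != d :> nat) -> door D (label p) D = false.
Proof.
move=> p_face bottom last_neq.
have last_lt : (last_coord p).+1 < D by move: (last_coord_lt p_face) last_neq; lia.
apply/negP => /forallP /(_ (Ordinal last_lt)) /existsP [j /andP [j_neq /eqP lj]].
apply: (label_face0 (i := last_coord p)) lj.
rewrite /vertex perm_last_coord (eqP bottom) add0n; apply/eqP; rewrite eqb0 -leqNgt.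
by move: (ltn_ord j) j_neq; lia.
Qed.

Lemma bottom_last_in_face (p : simplex) :
  [&& in_face D p, bottom_last p & (last_coord p == d :> nat)] = in_face d p.
Proof.
apply/idP/idP.
- move=> /and3P [/in_faceP p_face bottom /eqP last_d]; apply/in_faceP => x.
  rewrite leq_eqVlt => /orP [/eqP dx|]; last exact: p_face.
  have -> : x = last_coord p by apply: ord_inj; rewrite last_d.
  by rewrite perm_last_coord (eqP bottom).
- move=> /in_faceP p_face.
  case: (p_face (Ordinal d_lt_m) (leqnn _)) => /= b_d q_d.
  have last_d : last_coord p = Ordinal d_lt_m by apply/eqP; rewrite eq_sym -perm_eqd q_d.
  apply/and3P; split; last by rewrite last_d.
  + by apply/in_faceP => x Dx; apply: p_face; apply: ltnW.
  + by rewrite /bottom_last last_d b_d.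
Qed.

Lemma doorD_fully_labelled (l : nat -> nat) : door D l D = fully_labelled d l.
Proof.
apply: eq_forallb => a; apply/existsP/existsP => [[j /andP [j_neq la]]|[j la]].
- have j_lt : j < d.+1 by move: (ltn_ord j) j_neq; lia.
  by exists (Ordinal j_lt).
- have j_lt : j < D.+1 by apply: ltn_trans (ltn_ord j) _.
  by exists (Ordinal j_lt); rewrite /= la andbT neq_ltn ltn_ord.
Qed.

(* Swapping the positions [i] and [i + 1] in the order of the coordinates
   is a fixed-point-free involution on the simplices of the face that only
   moves vertex [i + 1]; it pairs off the doors opposite to that vertex. *)
Lemma inner_doors_even i :
  i < d -> ~~ odd (\sum_(p | in_face D p) door D (label p) i.+1).
Proof.
move=> id.
have i_lt : i < M by lia.
have i1_lt : i.+1 < M by lia.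
pose t : {perm 'I_M} := tperm (inord i) (inord i.+1).
have t_lt : forall (v : 'I_M) j, j != i.+1 -> (t v < j) = (v < j).
  move=> v j j_neq; rewrite /t.
  case: (eqVneq v (inord i)) => [->|v_i]; first by rewrite tpermL !inordK //; lia.
  case: (eqVneq v (inord i.+1)) => [->|v_i1]; first by rewrite tpermR !inordK //; lia.
  by rewrite tpermD // eq_sym.
pose swap (p : simplex) : simplex := (p.1, (p.2 * t)%g).
apply: (sum_even_of_involution (g := swap)).
- move=> p /in_faceP p_face; apply/in_faceP => x Dx; case: (p_face x Dx) => b_x q_x.
  split => //=; rewrite permM (_ : p.2 x = x); last exact: ord_inj.
  by rewrite /t tpermD //; apply/eqP => /(congr1 (@nat_of_ord _)); rewrite /= inordK //; lia.
- by move=> p _; rewrite /swap /= -mulgA tperm2 mulg1; case: p.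
- move=> p _; apply/negP => /eqP /(congr1 snd) /= swapped.
  have : (p.2 * t)%g ((p.2^-1)%g (inord i)) = p.2 ((p.2^-1)%g (inord i)) by rewrite swapped.
  by rewrite permM !permKV /t tpermL => /(congr1 (@nat_of_ord _)); rewrite !inordK //; lia.
- move=> p _ /=; congr nat_of_bool; apply: door_eq_on => j _ j_neq.
  rewrite /label /vertex /=; congr lam; apply: functional_extensionality => x.
  by rewrite permM t_lt.
Qed.

(* The doors opposite to vertex [0] are matched by [pivot] with the doors
   opposite to vertex [D] of the simplices not at the bottom. *)
Lemma sum_doors0 :
  \sum_(p | in_face D p) door D (label p) 0 = \sum_(p | unpivotable p) door D (label p) D.
Proof.
rewrite (bigID top_first) /= big1 ?add0n => [|p /andP [p_face top]]; last first.
  by rewrite door0_top_first.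
transitivity (\sum_(p | pivotable p) door D (label (pivot p)) D).
  by apply: eq_bigr => p p_piv; rewrite door_pivot.
apply: (@sum_reindex_bijection _ _ _ _ _ (fun p => door D (label p) D)).
- exact: pivot_unpivotable.
- exact: unpivot_pivotable.
- exact: pivotK.
- exact: unpivotK.
Qed.

Lemma sum_doorsD :
  \sum_(p | in_face D p) door D (label p) D =
  \sum_(p | unpivotable p) door D (label p) D + full_count d.
Proof.
rewrite (bigID bottom_last) /= addnC; congr addn.
rewrite (bigID (fun p => last_coord p == d :> nat)) /= [X in _ + X]big1 ?addn0.
  by apply: eq_big => [p|p _]; rewrite ?doorD_fully_labelled // -andbA bottom_last_in_face.
by move=> p /andP [/andP [p_face bottom] last_neq]; rewrite doorD_bottom_last.
Qed.

(* Counting pairs (simplex, door) of the [D]-dimensional face in two ways. *)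
Lemma full_count_step : odd (full_count D) = odd (full_count d).
Proof.
have split_doors : forall p : simplex, \sum_(k < D.+1) door D (label p) k =
    door D (label p) 0 + door D (label p) D + \sum_(i < d) door D (label p) i.+1.
  by move=> p; rewrite big_ord_recr big_ord_recl /= addnAC.
have inner_even : ~~ odd (\sum_(p | in_face D p) \sum_(i < d) door D (label p) i.+1).
  rewrite exchange_big odd_sum big1 //= => i _.
  exact/negbTE/inner_doors_even.
transitivity (odd (\sum_(p | in_face D p) \sum_(k < D.+1) door D (label p) k)).
  rewrite /full_count !odd_sum; apply: eq_bigr => p p_face.
  by rewrite door_parity ?oddb // => j jD; apply: label_in_face.
rewrite (eq_bigr _ (fun p _ => split_doors p)) !big_split /= sum_doors0 sum_doorsD.
by rewrite !oddD (negbTE inner_even) addbF addbA addbb.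
Qed.
End Step.

Lemma full_count_odd d : d <= M -> odd (full_count d).
Proof.
elim: d => [|d IH] dM; first exact: full_count0_odd.
by rewrite full_count_step // IH // ltnW.
Qed.

Theorem sperner : exists p : simplex, fully_labelled M (label p).
Proof.
have := full_count_odd (leqnn M); rewrite /full_count.
case: (pickP (fun p : simplex => in_face M p && fully_labelled M (label p))) => [p /andP [_ full]|none].
  by move=> _; exists p.
by rewrite big1 // => p p_face; move: (none p); rewrite p_face /= => ->.
Qed.
End Sperner.

Definition bool_of (P : Prop) : bool := if excluded_middle_informative P then true else false.

Lemma bool_ofP (P : Prop) : reflect P (bool_of P).
Proof. by rewrite /bool_of; case: excluded_middle_informative => H; constructor. Qed.

Section Lebesgue.
Variables (m0 n0 : nat) (col : ('I_m0.+1 -> nat) -> nat).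
Local Notation M := m0.+1.
Local Notation N := n0.+1.
Hypothesis col_lt : forall x, col x < M.

Definition adjacent (x y : 'I_M -> nat) : Prop := forall i, x i <= (y i).+1 /\ y i <= (x i).+1.

Inductive grid_chain (P : ('I_M -> nat) -> Prop) : ('I_M -> nat) -> ('I_M -> nat) -> Prop :=
  | grid_chain_refl x : P x -> grid_chain P x x
  | grid_chain_step x y z : P x -> adjacent x y -> grid_chain P y z -> grid_chain P x z.

Lemma grid_chain_start P x y : grid_chain P x y -> P x.
Proof. by case. Qed.

Lemma grid_chain_trans P x y z : grid_chain P x y -> grid_chain P y z -> grid_chain P x z.
Proof. by elim=> // a b c Pa ab _ IH cz; apply: grid_chain_step Pa ab (IH cz). Qed.

Lemma grid_chain_sym P x y : grid_chain P x y -> grid_chain P y x.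
Proof.
elim=> [a Pa|a b c Pa ab bc IH]; first exact: grid_chain_refl.
apply: grid_chain_trans IH _; apply: grid_chain_step (grid_chain_start bc) _ (grid_chain_refl Pa).
by move=> i; case: (ab i).
Qed.

Definition coloured c (x : 'I_M -> nat) : Prop := in_cube n0 x /\ col x = c.

Section NoCrossing.
Hypothesis no_crossing :
  forall c x y (i : 'I_M), grid_chain (coloured c) x y -> x i = N -> y i = 0 -> False.

Definition reaches_face0 x (i : 'I_M) : Prop :=
  (exists y, grid_chain (coloured (col x)) x y /\ y i = 0) \/ x i = 0.

Definition crossing_label x : nat :=
  if [pick i : 'I_M | ~~ bool_of (reaches_face0 x i)] is Some i then i.+1 else 0.

Lemma crossing_label_le x : crossing_label x <= M.
Proof. by rewrite /crossing_label; case: pickP => // i _; exact: ltn_ord. Qed.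

Lemma crossing_label_face0 x (i : 'I_M) : x i = 0 -> crossing_label x <> i.+1.
Proof.
move=> xi; rewrite /crossing_label; case: pickP => // j /negP not_reach [] /ord_inj ji.
by apply: not_reach; apply/bool_ofP; right; rewrite ji.
Qed.

Lemma crossing_label_faceN x (i : 'I_M) : in_cube n0 x -> x i = N -> crossing_label x <> 0.
Proof.
move=> _ xi; rewrite /crossing_label; case: pickP => // all_reach _.
move: (all_reach i) => /negbFE /bool_ofP [[y [xy yi]]|xi0]; first exact: no_crossing xy xi yi.
by rewrite xi in xi0.
Qed.

Lemma reaches_face0_chain x y (i : 'I_M) :
  grid_chain (coloured (col x)) x y -> reaches_face0 x i -> reaches_face0 y i.
Proof.
move=> xy; have [_ col_y] := grid_chain_start (grid_chain_sym xy).
rewrite /reaches_face0 col_y; case=> [[z [xz zi]]|xi]; left.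
- by exists z; split => //; apply: grid_chain_trans (grid_chain_sym xy) xz.
- by exists x; split => //; apply: grid_chain_sym.
Qed.

Lemma crossing_label_chain x y :
  grid_chain (coloured (col x)) x y -> crossing_label x = crossing_label y.
Proof.
move=> xy; have [_ col_y] := grid_chain_start (grid_chain_sym xy).
have yx : grid_chain (coloured (col y)) y x by rewrite col_y; apply: grid_chain_sym.
rewrite /crossing_label (@eq_pick _ _ (fun i => ~~ bool_of (reaches_face0 y i))) // => i /=.
by congr negb; apply/bool_ofP/bool_ofP; apply: reaches_face0_chain.
Qed.

Lemma vertex_adjacent (p : simplex m0 n0) j k : adjacent (vertex p j) (vertex p k).
Proof. by move=> i; rewrite /vertex; case: (_ < j); case: (_ < k); lia. Qed.

(* Sperner's lemma gives a fully labelled simplex: its [M + 1] vertices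
   carry distinct labels, but two of them share one of the [M] colours and
   hence, being adjacent, their label. *)
Lemma no_crossing_absurd : False.
Proof.
have [p full] := sperner crossing_label_le crossing_label_face0 crossing_label_faceN.
pose colour_of (j : 'I_M.+1) : 'I_M := Ordinal (col_lt (vertex p j)).
have : ~~ injectiveb colour_of.
  by apply/negP => /injectiveP /leq_card; rewrite !card_ord ltnn.
move=> /injectivePn [j1 [j2 j_neq /(congr1 (@nat_of_ord _)) /= same_col]].
have chain12 : grid_chain (coloured (col (vertex p j1))) (vertex p j1) (vertex p j2).
  apply: grid_chain_step (vertex_adjacent p j1 j2) (grid_chain_refl _) => //.
  - by split => //; apply: vertex_in_cube.
  - by split; [apply: vertex_in_cube | rewrite same_col].
have label_le_M : forall j, j <= M -> label crossing_label p j <= M.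
  by move=> j _; apply: crossing_label_le.
have lab_inj : injective (@vertex_label M (label crossing_label p)).
  apply: surjective_injective => y.
  move/forallP: full => /(_ y) /existsP [x /eqP lx]; exists x.
  by apply: ord_inj; rewrite (vertex_labelE label_le_M).
move/negP: j_neq; apply; apply/eqP/lab_inj/ord_inj; rewrite !(vertex_labelE label_le_M).
exact: crossing_label_chain.
Qed.
End NoCrossing.

Theorem lebesgue_covering :
  exists c x y (i : 'I_M), grid_chain (coloured c) x y /\ x i = N /\ y i = 0.
Proof.
apply: NNPP => none; apply: no_crossing_absurd => c x y i xy xi yi.
by apply: none; exists c, x, y, i.
Qed.
End Lebesgue.

Open Scope R_scope.

Definition pad (n : nat) (x : 'I_n.+1 -> nat) : nat -> nat :=
  fun i => if (i < n.+1)%N then x (inord i) else 0%N.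

Lemma pad_ord n (x : 'I_n.+1 -> nat) (o : 'I_n.+1) : pad x o = x o.
Proof. by rewrite /pad ltn_ord inord_val. Qed.

Lemma pad_lt n (x y : 'I_n.+1 -> nat) i :
  (i < n.+1)%coq_nat -> exists o : 'I_n.+1, pad x i = x o /\ pad y i = y o.
Proof. by move=> /ltP i_lt; exists (Ordinal i_lt); split; apply: (pad_ord _ (Ordinal i_lt)). Qed.

Section GridEmbedding.
Variables (e n n0 : nat).
Hypothesis dim_le : le n.+1 (Nat.pow 2 e).
Hypothesis side : n0.+1 = Nat.pow 2 (Nat.pow 2 e).

Definition grid_code (x : 'I_n.+1 -> nat) : nat := unary_code (Nat.pow 2 e) n.+1 (pad x).

Lemma grid_code_adjacent x y : in_cube n0 x -> in_cube n0 y -> adjacent x y ->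
  dist (grid_code x) (grid_code y) <= INR (e + 2).
Proof.
move=> x_cube y_cube xy; rewrite /dist /grid_code; apply: le_INR.
have := block_scale_pow2_add _ _ dim_le.
suff : (norm (Nat.lxor (unary_code (Nat.pow 2 e) n.+1 (pad x)) (unary_code (Nat.pow 2 e) n.+1 (pad y)))
        <= block_scale (Nat.add (Nat.pow 2 e) n.+1))%coq_nat by lia.
apply: norm_code_diff_adjacent => i i_lt; have [o [-> ->]] := pad_lt x y i_lt.
by move: (x_cube o) (y_cube o) (xy o); rewrite side; lia.
Qed.

Lemma grid_code_far x y (i : 'I_n.+1) : x i = n0.+1 -> y i = 0%N ->
  INR (Nat.add (Nat.pow 2 e) 1) <= dist (grid_code x) (grid_code y).
Proof.
move=> xi yi; apply: le_INR; apply: (norm_code_diff_far _ _ _ _ i); first exact/ltP.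
- by rewrite pad_ord xi side.
- by rewrite pad_ord yi.
Qed.
End GridEmbedding.

(* Given a cover by
   [n + 1] families whose [s]-components have diameter [<= C s + k], colour
   each point of a large cube by the family containing its code.  Lebesgue's
   covering lemma yields a monochromatic chain of adjacent points between
   opposite faces; its image is an [s]-chain (for [s = e + 3]) inside one
   family whose endpoints are more than [C s + k] apart. *)
Lemma dist_asdim_AN_infinite : asdim_AN_infinite dist.
Proof.
move=> n [C [k [C_pos cover]]].
have [e [dim_le big_gap]] := choose_block_index C k n C_pos.
set s := INR (Nat.add e 3).
have [U [U_cover U_bound]] := cover s (lt_0_INR (Nat.add e 3) ltac:(lia)).
set n0 := (Nat.pow 2 (Nat.pow 2 e)).-1.
have side : n0.+1 = Nat.pow 2 (Nat.pow 2 e).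
  by rewrite /n0 prednK //; apply/ltP/Nat.neq_0_lt_0/Nat.pow_nonzero.
pose col (x : 'I_n.+1 -> nat) :=
  proj1_sig (constructive_indefinite_description _ (U_cover (grid_code e x))).
have col_spec (x : 'I_n.+1 -> nat) : (col x <= n)%coq_nat /\ U (col x) (grid_code e x).
  exact: proj2_sig (constructive_indefinite_description _ (U_cover (grid_code e x))).
have col_lt (x : 'I_n.+1 -> nat) : (col x < n.+1)%N by apply/ltP; have := proj1 (col_spec x); lia.
have [c [x [y [i [xy [xi yi]]]]]] := lebesgue_covering n0 col_lt.
have s_chain_of : forall x y, grid_chain (coloured n0 col c) x y ->
    s_chain dist s (U c) (grid_code e x) (grid_code e y).
  move=> x1 y1; elim=> [x2 [_ <-]|x2 y2 z2 [x2_cube <-] x2y2 y2z2 IH].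
  - by apply: chain_refl; case: (col_spec x2).
  - apply: chain_step IH; first by case: (col_spec x2).
    have [y2_cube _] := grid_chain_start y2z2.
    apply: Rle_lt_trans (grid_code_adjacent dim_le side x2_cube y2_cube x2y2) _.
    by apply: lt_INR; lia.
(* The crossing chain thus has diameter [<= C s + k < 2 ^ e + 1]. *)
have [_ c_col] := grid_chain_start xy.
have c_le : (c <= n)%coq_nat by rewrite -c_col; case: (col_spec x).
have := U_bound c c_le _ _ (s_chain_of x y xy).
have := grid_code_far side xi yi.
by move=> far bound; rewrite /s in bound; lra.
Qed.

Theorem corollary3p9 :
  exists (K : Type) (mul : K -> K -> K) (one : K) (inv : K -> K) (dK : K -> K -> R),
    is_group mul one inv /\
    locally_finite mul one inv /\
    proper_left_invariant_metric mul one dK /\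
    asdim_AN_infinite dK /\
    all_cones_ultrametric dK.
Proof.
exists nat, Nat.lxor, 0%N, (fun x => x), dist.
split; first exact: xor_group.
split; first exact: xor_locally_finite.
split; first exact: dist_proper_left_invariant.
split; first exact: dist_asdim_AN_infinite.
exact: all_cones_ultrametric_of_quasi dist_quasi_ultrametric.
Qed.
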